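(* For any matroid $M$ (not necessarily realizable) on $E=\{0,\dots,n\}$, the tuples $([\mathcal S_M]_\sigma)_\sigma$ and $([\mathcal Q_M]_\sigma)_\sigma$ of Laurent polynomials defined by $[\mathcal S_M]_\sigma=\sum_{i\in B_\sigma(M)}T_i^{-1}$ and $[\mathcal Q_M]_\sigma=\sum_{i\notin B_\sigma(M)}T_i^{-1}$ are well-defined elements of $K_T^0(X_E)$ (i.e. lie in the image of the restriction map), and $[\mathcal S_M]+[\mathcal Q_M]=[\underline{\mathbb C}^E_{\mathrm{inv}}]$.
   Context: $T=(\mathbb C^* )^E$; $X_E$ is the permutohedral variety (toric variety of the fan in $\mathbb R^E/\mathbb R\mathbf 1$ with cones $\operatorname{Cone}(\overline{\mathbf e}_{S_1},\dots,\overline{\mathbf e}_{S_k})$ for chains of nonempty proper subsets), whose $T$-fixed points $p_\sigma$ are indexed by permutations $\sigma$ of $E$. The restriction map $K_T^0(X_E)\to\prod_{\sigma}\mathbb Z[T_0^{\pm1},\dots,T_n^{\pm1}]$ is injective, with image the tuples $(f_\sigma)$ such that $f_\sigma\equiv f_{\sigma'}\bmod(1-T_{\sigma(i+1)}/T_{\sigma(i)})$ whenever $\sigma'=\sigma\circ(i,i+1)$. $B_\sigma(M)$ is the lexicographically first basis of $M$ for the order $\sigma(0)\prec\cdots\prec\sigma(n)$. $\underline{\mathbb C}^E_{\mathrm{inv}}=X_E\times\mathbb C^E$ with $T$ acting by $t\cdot x=(t_i^{-1}x_i)$; its class restricts to $\sum_{i\in E}T_i^{-1}$ at every $p_\sigma$.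 *)

From HB Require Import structures.
From mathcomp Require Import all_boot all_order all_algebra all_fingroup.
From mathcomp Require Import fraction.
From mathcomp Require Import mpoly.

Set Implicit Arguments.
Unset Strict Implicit.
Unset Printing Implicit Defensive.

Import GRing.Theory.
Local Open Scope ring_scope.

(* Ground set E = {0,...,n} is 'I_n.+1. *)

Definition basis_exchange (n : nat) (B : {set {set 'I_n.+1}}) : Prop :=
  forall B1 B2, B1 \in B -> B2 \in B ->
  forall x, x \in B1 :\: B2 ->
  exists2 y, y \in B2 :\: B1 & (y |: (B1 :\ x)) \in B.

Record matroid (n : nat) := Matroid {
  mbases : {set {set 'I_n.+1}};
  mbases_nonempty : mbases != set0;
  mbases_exchange : basis_exchange mbases
}.

Fixpoint lexle (s t : seq nat) : bool :=
  match s, t with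
  | [::], _ => true
  | _ :: _, [::] => false
  | x :: s', y :: t' => (x < y)%N || ((x == y) && lexle s' t')
  end.

(* Position of x in the order sigma(0) < ... < sigma(n) is sigma^-1(x). *)
Definition pos (n : nat) (s : {perm 'I_n.+1}) (x : 'I_n.+1) : nat :=
  nat_of_ord ((s^-1)%g x).

Definition lexkey (n : nat) (s : {perm 'I_n.+1}) (A : {set 'I_n.+1}) : seq nat :=
  sort leq [seq pos s x | x <- enum A].

Definition is_lexfirst_basis (n : nat) (M : matroid n) (s : {perm 'I_n.+1})
  (B : {set 'I_n.+1}) : bool :=
  (B \in mbases M) &&
  [forall B' in mbases M, lexle (lexkey s B) (lexkey s B')].

Definition Bsigma (n : nat) (M : matroid n) (s : {perm 'I_n.+1}) : {set 'I_n.+1} :=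
  odflt set0 [pick B | is_lexfirst_basis M s B].

(* realised inside the fraction field of Z[T_0,...,T_n]. *)
Definition Frac (n : nat) := {fraction {mpoly int[n.+1]}}.

Definition tofr (n : nat) (p : {mpoly int[n.+1]}) : Frac n := FracField.tofrac p.

Definition T (n : nat) (i : 'I_n.+1) : Frac n := tofr ('X_i : {mpoly int[n.+1]}).

Definition is_laurent (n : nat) (f : Frac n) : Prop :=
  exists (p : {mpoly int[n.+1]}) (k : nat),
    f = tofr p / (\prod_(i < n.+1) T i) ^+ k.

Definition laurent_cong (n : nat) (a b : 'I_n.+1) (f g : Frac n) : Prop :=
  exists2 h : Frac n, is_laurent h & f - g = (1 - T a / T b) * h.

(* sigma' = sigma o (i, i+1): in mathcomp, (t * s) x = s (t x). *)
Definition adj_swap (n : nat) (s : {perm 'I_n.+1}) (i : 'I_n) : {perm 'I_n.+1} :=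
  (tperm (widen_ord (leqnSn n) i) (lift ord0 i) * s)%g.

Definition in_KT (n : nat) (f : {perm 'I_n.+1} -> Frac n) : Prop :=
  (forall s, is_laurent (f s)) /\
  (forall (s : {perm 'I_n.+1}) (i : 'I_n),
     laurent_cong (s (lift ord0 i)) (s (widen_ord (leqnSn n) i))
                  (f s) (f (adj_swap s i))).

Definition classSM (n : nat) (M : matroid n) (s : {perm 'I_n.+1}) : Frac n :=
  \sum_(i in Bsigma M s) (T i)^-1.

Definition classQM (n : nat) (M : matroid n) (s : {perm 'I_n.+1}) : Frac n :=
  \sum_(i in ~: Bsigma M s) (T i)^-1.

Definition classCEinv (n : nat) (s : {perm 'I_n.+1}) : Frac n :=
  \sum_(i < n.+1) (T i)^-1.

(* For a total order on E, the lexicographically first basis B is the basis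
   such that, for every other basis D, the first element of the symmetric
   difference of B and D lies in B.  Swapping the adjacent elements
   b = sigma(i) and a = sigma(i+1) inverts only the pair (b, a), so if
   B_sigma' <> B_sigma their first differences must be b in B_sigma and a in
   B_sigma'.  Basis exchange then shows that B_sigma - b + a and
   B_sigma' - a + b are bases, and comparing them with B_sigma' and B_sigma
   forces B_sigma' = B_sigma - b + a.  Hence [S_M]_sigma - [S_M]_sigma' is 0 or
   T_b^-1 - T_a^-1 = (1 - T_a / T_b) (- T_a^-1), and [Q_M] = [C^E_inv] - [S_M]
   inherits these congruences because [C^E_inv] is the same at every fixed
   point. *)

From mathcomp Require Import all_boot all_order all_algebra all_fingroup.
From mathcomp Require Import fraction mpoly.
From mathcomp Require Import zify ring.

Set Implicit Arguments.
Unset Strict Implicit.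
Unset Printing Implicit Defensive.

Import Order.TTheory GRing.Theory.

Lemma lexleE (s t : seq nat) : lexle s t = (s <= t :> seqlexi nat)%O.
Proof.
elim: s t => [|x s IH] [|y t] //=.
by rewrite lexi_cons IH !leEnat; case: ltngtP.
Qed.

Lemma lexle_first_diff (s t : seq nat) k :
  sorted ltn s -> sorted ltn t -> size s = size t ->
  (forall j, j < k -> (j \in s) = (j \in t)) -> k \in t -> k \notin s ->
  ~~ lexle s t.
Proof.
elim: s t => [|x s IH] [|y t] //= ps pt [size_st] agree kt ks.
have /allP sx := order_path_min ltn_trans ps.
have /allP ty := order_path_min ltn_trans pt.
have yk : y <= k by move: kt; rewrite in_cons => /predU1P [->|/ty /ltnW].
have xk : x != k by apply: contraNneq ks => <-; exact: mem_head.
have yx : y <= x.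
  rewrite leqNgt; apply/negP => ltxy.
  have : x \in y :: t by rewrite -agree ?mem_head //; lia.
  by rewrite in_cons => /predU1P [?|/ty]; lia.
have [eqyk|ltyk] : y = k \/ y < k by lia.
  by rewrite eqyk (negbTE xk) orbF -leqNgt -eqyk.
have eqxy : x = y.
  have : y \in x :: s by rewrite agree // mem_head.
  by rewrite in_cons => /predU1P [//|/sx]; lia.
subst y; rewrite ltnn eqxx /=.
apply: IH (path_sorted ps) (path_sorted pt) size_st _ _ _.
- have xs : x \notin s by apply/negP => /sx; rewrite ltnn.
  have xt : x \notin t by apply/negP => /ty; rewrite ltnn.
  move=> j ltjk; move: (agree j ltjk); rewrite !in_cons.
  by case: (j =P x) => [->|]; rewrite ?(negbTE xs) ?(negbTE xt).
- by move: kt; rewrite in_cons eq_sym (ltn_eqF ltyk).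
- by move: ks; rewrite in_cons negb_or => /andP [].
Qed.

Lemma setD_exchange (T : finType) (A B : {set T}) x y :
  y \in B -> (y |: A :\ x) :\: B = (A :\: B) :\ x.
Proof.
move=> yB; apply/setP => z; rewrite !inE.
by case: (z =P y) => [->|_]; rewrite ?yB ?andbF // andbCA.
Qed.

Lemma card_exchange (T : finType) (A : {set T}) x y :
  x \in A -> y \notin A -> #|y |: A :\ x| = #|A|.
Proof.
by move=> xA yA; rewrite cardsU1 (cardsD1 x A) xA !inE (negbTE yA) andbF.
Qed.

Section Positions.
Variable n : nat.
Implicit Types (r : {perm 'I_n.+1}) (A D : {set 'I_n.+1}).

Lemma pos_inj r : injective (pos r).
Proof. by move=> x y /val_inj /perm_inj. Qed.

Lemma pos_perm r (j : 'I_n.+1) : pos r (r j) = j.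
Proof. by rewrite /pos permK. Qed.

Lemma mem_lexkey r A x : (pos r x \in lexkey r A) = (x \in A).
Proof. by rewrite /lexkey mem_sort (mem_map (@pos_inj r)) mem_enum. Qed.

Lemma lexkey_sorted r A : sorted ltn (lexkey r A).
Proof.
rewrite ltn_sorted_uniq_leq sort_uniq sort_sorted ?andbT; last exact: leq_total.
by rewrite (map_inj_uniq (@pos_inj r)) enum_uniq.
Qed.

Lemma size_lexkey r A : size (lexkey r A) = #|A|.
Proof. by rewrite /lexkey size_sort size_map cardE. Qed.

Definition agree_below r k A D :=
  forall x, (pos r x < k)%N -> (x \in A) = (x \in D).

Lemma agree_below_leq r k A D x :
  agree_below r k A D -> (x \in A) != (x \in D) -> (k <= pos r x)%N.
Proof. by move=> agree; apply: contraR; rewrite -ltnNge => /agree ->. Qed.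

Lemma agree_belowS r k A D m :
  agree_below r k A D -> pos r m = k -> (m \in A) = (m \in D) ->
  agree_below r k.+1 A D.
Proof.
move=> agree posm eqm x; rewrite ltnS leq_eqVlt => /predU1P [|/agree //].
by rewrite -posm => /pos_inj ->.
Qed.

Lemma agree_below_exchange r k A D x y :
  agree_below r k A D -> (k <= pos r x)%N -> (k <= pos r y)%N ->
  agree_below r k A (y |: D :\ x).
Proof.
move=> agree kx ky z ltzk; rewrite agree // !inE.
have neq_pos w : (k <= pos r w)%N -> z != w.
  by move=> kw; apply: contraTneq ltzk => ->; rewrite -leqNgt.
by rewrite (negbTE (neq_pos _ kx)) (negbTE (neq_pos _ ky)).
Qed.

Lemma exists_first_diff r A D : A != D ->
  exists m, (m \in A) != (m \in D) /\ agree_below r (pos r m) A D.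
Proof.
move=> neqAD; pose diff x := (x \in A) != (x \in D).
have [m0 diff_m0] : exists m, diff m.
  apply/existsP; apply: contraNT neqAD => /existsPn eqAD.
  by apply/eqP/setP => x; apply/eqP/negPn/eqAD.
case: (@arg_minnP _ m0 diff (pos r) diff_m0) => m diff_m min_m.
exists m; split => // x ltx; apply/eqP/negPn; apply: contraTN ltx => /min_m.
by rewrite -leqNgt.
Qed.

End Positions.

Section Matroid.
Variables (n : nat) (M : matroid n).
Implicit Types (r : {perm 'I_n.+1}) (B D : {set 'I_n.+1}).

Lemma exchange_basis B1 B2 x : B1 \in mbases M -> B2 \in mbases M ->
  x \in B1 -> x \notin B2 ->
  exists2 y, (y \in B2) && (y \notin B1) & y |: B1 :\ x \in mbases M.
Proof.
move=> B1b B2b xB1 xB2.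
have xB12 : x \in B1 :\: B2 by rewrite inE xB2.
by have [y] := mbases_exchange B1b B2b xB12; rewrite inE andbC; exists y.
Qed.

Lemma leq_card_mbases B1 B2 : B1 \in mbases M -> B2 \in mbases M -> #|B1| <= #|B2|.
Proof.
have [k] := ubnP #|B1 :\: B2|; elim: k B1 => // k IH B1 ltk B1b B2b.
have [/eqP|] := posnP #|B1 :\: B2|.
  by rewrite cards_eq0 setD_eq0 => /subset_leq_card.
case/card_gt0P => x; rewrite inE => /andP [xB2 xB1].
have [y /andP [yB2 yB1] B1'b] := exchange_basis B1b B2b xB1 xB2.
rewrite -(card_exchange xB1 yB1); apply: IH => //.
by move: ltk; rewrite setD_exchange // (cardsD1 x) inE xB2 xB1.
Qed.

Lemma eq_card_mbases B1 B2 : B1 \in mbases M -> B2 \in mbases M -> #|B1| = #|B2|.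
Proof. by move=> B1b B2b; apply/eqP; rewrite eqn_leq !leq_card_mbases. Qed.

Lemma lexfirst_basis_exists r : exists B, is_lexfirst_basis M r B.
Proof.
have [B0 B0b] := set0Pn _ (mbases_nonempty M).
case: (@arg_minP _ _ _ B0 (mem (mbases M)) (fun B => lexkey r B : seqlexi nat) B0b).
move=> B Bb Bmin; exists B; apply/andP; split => //.
by apply/forall_inP => D Db; rewrite lexleE; apply: Bmin.
Qed.

Lemma Bsigma_lexfirst r : is_lexfirst_basis M r (Bsigma M r).
Proof.
rewrite /Bsigma; case: pickP => [//|none].
by have [B] := lexfirst_basis_exists r; rewrite none.
Qed.

Lemma lexfirst_mbases r B : is_lexfirst_basis M r B -> B \in mbases M.
Proof. by case/andP. Qed.

Lemma lexfirst_first_diff r B D m : is_lexfirst_basis M r B -> D \in mbases M ->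
  agree_below r (pos r m) B D -> m \in D -> m \in B.
Proof.
case/andP=> Bb /forall_inP lexB Db agree mD; apply: contraT => mB.
have ltm : pos r m < n.+1 by exact: ltn_ord.
suff : ~~ lexle (lexkey r B) (lexkey r D) by rewrite lexB.
apply: (lexle_first_diff (k := pos r m)).
- exact: lexkey_sorted.
- exact: lexkey_sorted.
- by rewrite !size_lexkey (eq_card_mbases Bb Db).
- move=> j ltj; have ltjn : j < n.+1 by exact: ltn_trans ltm.
  by rewrite -[j]/(nat_of_ord (Ordinal ltjn)) -(pos_perm r) !mem_lexkey agree // pos_perm.
- by rewrite mem_lexkey.
- by rewrite mem_lexkey.
Qed.

Lemma lexfirst_first_diff_in r B D : is_lexfirst_basis M r B -> D \in mbases M ->
  B != D -> exists m, [/\ m \in B, m \notin D & agree_below r (pos r m) B D].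
Proof.
move=> lexB Db /(exists_first_diff r) [m [diff_m agree]].
have mB : m \in B.
  apply: contraNT diff_m => mB.
  by rewrite (negbTE mB) (contraNF (lexfirst_first_diff lexB Db agree) mB).
by exists m; move: diff_m; rewrite mB.
Qed.

End Matroid.

Lemma lexfirst_exchange_succ n (M : matroid n) r B D u v :
  is_lexfirst_basis M r B -> pos r v = (pos r u).+1 -> u \in B -> v \notin B ->
  D \in mbases M -> agree_below r (pos r u) B D -> v \in D -> u \notin D ->
  v |: B :\ u \in mbases M.
Proof.
move=> lexB posv uB vB; have Bb := lexfirst_mbases lexB.
(* Induction on #|D :\: B|: exchanging some x in D :\ B, x <> v, for an
   element of B moves D closer to B; if that element were u, the new basis
   would agree with B strictly before v while containing v, contradicting the
   lexicographic minimality of B. *)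
have [k] := ubnP #|D :\: B|; elim: k D => // k IH D ltk Db agree vD uD.
have [DBv|] := boolP (D :\: B \subset [set v]).
  suff -> : v |: B :\ u = D by [].
  apply/esym/eqP; rewrite eqEcard card_exchange // (eq_card_mbases Db Bb) leqnn andbT.
  apply/subsetP => z zD; rewrite !inE; have [zB|zNB] := boolP (z \in B).
    by rewrite andbT; apply/orP; right; apply: contraNneq uD => <-.
  by have := subsetP DBv z; rewrite !inE zD zNB => ->.
case/subsetPn => x; rewrite !inE => /andP [xB xD] xv.
have [y /andP [yB yND] D'b] := exchange_basis Db Bb xD xB.
have ux : pos r u <= pos r x by apply: agree_below_leq agree _; rewrite xD (negbTE xB).
have uy : pos r u <= pos r y by apply: agree_below_leq agree _; rewrite yB (negbTE yND).
have agree' := agree_below_exchange agree ux uy.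
have vD' : v \in y |: D :\ x by rewrite !inE vD andbT [v == x]eq_sym xv orbT.
have [eq_yu|neq_yu] := eqVneq y u.
  have agree_v : agree_below r (pos r v) B (y |: D :\ x).
    by rewrite posv; apply: agree_belowS agree' erefl _; rewrite uB !inE eq_yu eqxx.
  by have := lexfirst_first_diff lexB D'b agree_v vD'; rewrite (negbTE vB).
apply: IH D'b agree' vD' _ => //.
  by move: ltk; rewrite setD_exchange // (cardsD1 x) inE xB xD.
by rewrite !inE negb_or eq_sym neq_yu negb_and negbK uD orbT.
Qed.

Section AdjacentSwap.
Variables (n : nat) (M : matroid n) (s : {perm 'I_n.+1}) (i : 'I_n).

Local Notation s' := (adj_swap s i).
Local Notation b := (s (widen_ord (leqnSn n) i)).
Local Notation a := (s (lift ord0 i)).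

Lemma pos_adj_swap x : pos s' x =
  if pos s x == i then i.+1 else if pos s x == i.+1 then i : nat else pos s x.
Proof.
rewrite /pos /adj_swap invMg permM tpermV.
case: tpermP => [->|->|]; rewrite ?lift0 ?eqxx ?(gtn_eqF (ltnSn i)) //.
move=> /eqP neq_w /eqP neq_l; rewrite -!val_eqE /= in neq_w neq_l.
by rewrite (negbTE neq_w) (negbTE neq_l).
Qed.

Lemma pos_adj_swap_inversion x y : x != y ->
  pos s x <= pos s y -> pos s' y <= pos s' x -> x = b /\ y = a.
Proof.
move=> neq_xy le_xy; rewrite !pos_adj_swap => le_swap.
have neq_pos : pos s x != pos s y by rewrite (inj_eq (@pos_inj _ s)).
have [px py] : pos s x = i /\ pos s y = i.+1.
  move: (nat_of_ord i) (pos s x) (pos s y) le_xy le_swap neq_pos => k p q.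
  by case: (p =P k); case: (p =P k.+1); case: (q =P k); case: (q =P k.+1); lia.
by split; apply: (@pos_inj _ s); rewrite ?px ?py pos_perm ?lift0.
Qed.

Lemma Bsigma_adj_swap : Bsigma M s' = Bsigma M s \/
  [/\ b \in Bsigma M s, a \notin Bsigma M s & Bsigma M s' = a |: Bsigma M s :\ b].
Proof.
set B := Bsigma M s; set B' := Bsigma M s'.
have lexB := Bsigma_lexfirst M s; have lexB' := Bsigma_lexfirst M s'.
have Bb := lexfirst_mbases lexB; have B'b := lexfirst_mbases lexB'.
have [->|neqBB'] := eqVneq B B'; [by left | right].
have [m [mB mB' agree]] := lexfirst_first_diff_in lexB B'b neqBB'.
have neqB'B : B' != B by rewrite eq_sym.
have [m' [m'B' m'B agree']] := lexfirst_first_diff_in lexB' Bb neqB'B.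
have [em em'] : m = b /\ m' = a.
  apply: pos_adj_swap_inversion.
  - by apply: contraNneq m'B => <-.
  - by apply: agree_below_leq agree _; rewrite m'B' (negbTE m'B).
  - by apply: agree_below_leq agree' _; rewrite mB (negbTE mB').
subst m m'.
have posa : pos s a = (pos s b).+1 by rewrite !pos_perm lift0.
have Cb := lexfirst_exchange_succ lexB posa mB m'B B'b agree m'B' mB'.
have posb' : pos s' b = (pos s' a).+1.
  by rewrite !pos_adj_swap !pos_perm lift0 eqxx (gtn_eqF (ltnSn i)) eqxx.
have Eb := lexfirst_exchange_succ lexB' posb' m'B' mB' Bb agree' mB m'B.
(* If B' differed from the basis a |: B :\ b, its first difference with it
   (for s') and that of B with b |: B' :\ a (for s) would form a second pair
   inverted by the swap. *)
split => //; apply/eqP; apply: contraT => neqB'C.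
have [z [zB' zC agree_z]] := lexfirst_first_diff_in lexB' Cb neqB'C.
have zb : z != b by apply: contraTneq zB' => ->.
have za : z != a by apply: contraNneq zC => ->; rewrite !inE eqxx.
have zB : z \notin B by move: zC; rewrite !inE (negbTE za) zb.
have zE : z \in b |: B' :\ a by rewrite !inE za zB' orbT.
have neqBE : B != b |: B' :\ a by apply: contraNneq zB => ->.
have [w [wB wE agree_w]] := lexfirst_first_diff_in lexB Eb neqBE.
have wb : w != b by apply: contraNneq wE => ->; rewrite !inE eqxx.
have wa : w != a by apply: contraTneq wB => ->.
have wB' : w \notin B' by move: wE; rewrite !inE (negbTE wb) wa.
have wC : w \in a |: B :\ b by rewrite !inE wb wB orbT.
have [ewb _] : w = b /\ z = a.
  apply: pos_adj_swap_inversion.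
  - by apply: contraTneq wB => ->.
  - by apply: agree_below_leq agree_w _; rewrite zE (negbTE zB).
  - by apply: agree_below_leq agree_z _; rewrite wC (negbTE wB').
by rewrite ewb eqxx in wb.
Qed.
End AdjacentSwap.

Local Open Scope ring_scope.

Lemma inv_sub_factor (F : fieldType) (x y z : F) : x != 0 -> y != 0 ->
  (y^-1 + z) - (x^-1 + z) = (1 - x / y) * - x^-1.
Proof. by move=> x0 y0; field; rewrite x0 y0. Qed.

Section Laurent.
Variable n : nat.

Lemma T_neq0 (i : 'I_n.+1) : T i != 0.
Proof.
rewrite tofrac_eq0; apply/eqP => /(congr1 (mcoeff U_(i))).
by rewrite mcoeffX eqxx mcoeff0.
Qed.

Lemma TinvE (i : 'I_n.+1) :
  (T i)^-1 = tofr (\prod_(j | j != i) 'X_j) / \prod_(j < n.+1) T j.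
Proof.
have prod_neq0 : \prod_(j | j != i) T j != 0 by apply/prodf_neq0 => j _; exact: T_neq0.
rewrite [\prod_(j < n.+1) T j](bigD1 i) //= /tofr rmorph_prod.
by rewrite invfM mulrCA divff ?mulr1.
Qed.

Lemma is_laurent_sum_Tinv (A : {set 'I_n.+1}) : is_laurent (\sum_(i in A) (T i)^-1).
Proof.
exists (\sum_(i in A) \prod_(j | j != i) 'X_j), 1%N.
by rewrite expr1 /tofr rmorph_sum mulr_suml; apply: eq_bigr => i _; rewrite TinvE.
Qed.

Lemma is_laurentN (f : Frac n) : is_laurent f -> is_laurent (- f).
Proof. by case=> p [k ->]; exists (- p), k; rewrite /tofr rmorphN mulNr. Qed.

Lemma laurent_cong_refl a b (f : Frac n) : laurent_cong a b f f.
Proof. by exists 0; [exists 0, 0%N; rewrite /tofr rmorph0 mul0r | rewrite subrr mulr0]. Qed.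

Lemma laurent_congB a b (c f g : Frac n) :
  laurent_cong a b f g -> laurent_cong a b (c - f) (c - g).
Proof.
case=> h lh eq_fg; exists (- h); first exact: is_laurentN.
by rewrite opprB addrC addrA subrK -opprB eq_fg mulrN.
Qed.

Lemma laurent_cong_exchange (B : {set 'I_n.+1}) a b : b \in B -> a \notin B ->
  laurent_cong a b (\sum_(j in B) (T j)^-1) (\sum_(j in a |: B :\ b) (T j)^-1).
Proof.
move=> bB aB; exists (- (T a)^-1).
  by have := is_laurent_sum_Tinv [set a]; rewrite big_set1 => /is_laurentN.
rewrite big_setU1 /= ?(big_setD1 _ bB) /=; last by rewrite !inE (negbTE aB) andbF.
exact: inv_sub_factor (T_neq0 a) (T_neq0 b).
Qed.

End Laurent.

Lemma classSM_add_classQM n (M : matroid n) s : classSM M s + classQM M s = classCEinv s.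
Proof.
rewrite /classSM /classQM /classCEinv [RHS](bigID (mem (Bsigma M s))) /=.
by congr (_ + _); apply: eq_bigl => j; rewrite inE.
Qed.

Lemma classSM_adj_swap n (M : matroid n) (s : {perm 'I_n.+1}) (i : 'I_n) :
  laurent_cong (s (lift ord0 i)) (s (widen_ord (leqnSn n) i))
    (classSM M s) (classSM M (adj_swap s i)).
Proof.
rewrite /classSM; case: (Bsigma_adj_swap M s i) => [-> | [bB aB ->]].
  exact: laurent_cong_refl.
exact: laurent_cong_exchange.
Qed.

Theorem proposition3p8 (n : nat) (M : matroid n) :
  in_KT (classSM M) /\ in_KT (classQM M) /\
  (forall s : {perm 'I_n.+1}, classSM M s + classQM M s = classCEinv s).
Proof.
have classQME s : classQM M s = classCEinv s - classSM M s.
  by rewrite -(classSM_add_classQM M s) addrAC subrr add0r.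
split; [|split]; last exact: classSM_add_classQM.
- by split=> [s|s i]; [exact: is_laurent_sum_Tinv | exact: classSM_adj_swap].
- split=> [s|s i]; first exact: is_laurent_sum_Tinv.
  by rewrite !classQME; apply: laurent_congB; exact: classSM_adj_swap.
Qed.
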